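(* Let $[\mu]\in\mathbb PV_n$ be a critical point of $F_n$ and $[\lambda]\in\mathbb PV_m$ a critical point of $F_m$. Then there exists $t\in\mathbb C$ such that $[\mu\oplus t\lambda]$ is a critical point of $F_{n+m}$, where $\mu\oplus t\lambda$ is the algebra on $\mathbb C^{n+m}=\mathbb C^n\oplus\mathbb C^m$ (orthogonal sum) given by $(\mu\oplus t\lambda)(X_1+Y_1,X_2+Y_2)=\mu(X_1,X_2)+t\lambda(Y_1,Y_2)$ for $X_i\in\mathbb C^n$, $Y_i\in\mathbb C^m$.
   Context: $V_k$ denotes the space of bilinear maps $\mathbb C^k\times\mathbb C^k\to\mathbb C^k$ with the standard Hermitian inner products; $F_k:\mathbb PV_k\to\mathbb R$ is $F_k([\mu])=\operatorname{tr}\mathrm M_\mu^2/\|\mu\|^4$, where $\|\mu\|^2=\sum_{i,j}\|\mu(X_i,X_j)\|^2$ for an orthonormal basis $\{X_i\}$, and $\mathrm M_\mu=2\sum_i L^\mu_{X_i}(L^\mu_{X_i})^*-2\sum_i (L^\mu_{X_i})^*L^\mu_{X_i}-2\sum_i (R^\mu_{X_i})^*R^\mu_{X_i}$ with $L^\mu_XY=\mu(X,Y)$, $R^\mu_XY=\mu(Y,X)$. It is known that $[\mu]$ is a critical point of $F_k$ iff $\mathrm M_\mu=c_\mu I+D_\mu$ for some $c_\mu\in\mathbb R$ and some derivation $D_\mu$ of $\mu$. *)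

From HB Require Import structures.
From mathcomp Require Import all_boot all_order all_algebra.
From mathcomp Require Import all_classical all_reals all_analysis.
From mathcomp Require Import complex.
Import Order.TTheory GRing.Theory Num.Theory.

Set Implicit Arguments.
Unset Strict Implicit.
Unset Printing Implicit Defensive.

Local Open Scope ring_scope.

Section CriticalPoints.
Variable R : realType.
Local Notation C := (R[i]).

(* V_k : a bilinear map C^k x C^k -> C^k, given by its values on the
   standard (orthonormal) basis: mu i j = mu(e_i, e_j) in C^k. *)
Definition bilmap (k : nat) := 'I_k -> 'I_k -> 'cV[C]_k.

Definition bil_apply k (mu : bilmap k) (X Y : 'cV[C]_k) : 'cV[C]_k :=
  \sum_(i < k) \sum_(j < k) (X i 0 * Y j 0) *: mu i j.

(* matrices of L^mu_{e_i} : Y |-> mu(e_i, Y) and R^mu_{e_i} : Y |-> mu(Y, e_i) *)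
Definition Lmat k (mu : bilmap k) (i : 'I_k) : 'M[C]_k :=
  \matrix_(l < k, j < k) mu i j l 0.
Definition Rmat k (mu : bilmap k) (i : 'I_k) : 'M[C]_k :=
  \matrix_(l < k, j < k) mu j i l 0.

Definition adjmx k (A : 'M[C]_k) : 'M[C]_k := (map_mx Num.conj A)^T.

Definition Mmu k (mu : bilmap k) : 'M[C]_k :=
  (2 : C) *: (\sum_(i < k) Lmat mu i *m adjmx (Lmat mu i))
  - (2 : C) *: (\sum_(i < k) adjmx (Lmat mu i) *m Lmat mu i)
  - (2 : C) *: (\sum_(i < k) adjmx (Rmat mu i) *m Rmat mu i).

Definition sqmod (z : C) : R := complex.Re z ^+ 2 + complex.Im z ^+ 2.

Definition normsq k (mu : bilmap k) : R :=
  \sum_(i < k) \sum_(j < k) \sum_(l < k) sqmod (mu i j l 0).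

(* F_k(mu) = tr (M_mu^2) / ||mu||^4  (tr M_mu^2 is real since M_mu is
   Hermitian; we take its real part to view F_k as real-valued). *)
Definition Fk k (mu : bilmap k) : R :=
  complex.Re (\tr (Mmu mu *m Mmu mu)) / (normsq mu) ^+ 2.

(* [mu] is a critical point of F_k on PV_k: mu is nonzero and the
   (scale-invariant) function F_k is critical at mu on V_k \ {0}, i.e. every
   real directional derivative of F_k at mu vanishes. *)
Definition critical k (mu : bilmap k) : Prop :=
  (exists i j, mu i j != 0) /\
  forall nu : bilmap k,
    is_derive (0 : R) (1 : R)
      (fun s : R => Fk (fun i j => mu i j + ((s%:C)%C : C) *: nu i j)) (0 : R).

End CriticalPoints.

(* Along a real line s |-> a + s b, F_k is a quartic polynomial in s divided
   by the square of the quadratic polynomial ||a + s b||^2.  Its derivative at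
   s = 0 is 2 defect(a, b) / ||a||^6, where
     defect(a, b) = g1(a, b) ||a||^2 - tr(M_a^2) n1(a, b),
   g1 being half the first-order variation of tr M^2 and n1 the first-order
   variation of ||.||^2.  Hence [a] is critical iff a <> 0 and defect(a, b)
   vanishes for every direction b (critical_defect, defect_critical).

   For rho = a (+) b the operators L^rho_i, R^rho_i are block diagonal, so
   M_rho = diag(M_a, M_b), and tr M^2, ||.||^2, g1 and n1 at rho split into
   the contributions of a and b along the two corners of a direction v.  An
   elementary identity (balanced_sum) then gives defect(rho, v) = 0 whenever
   a and b are critical with tr M_a^2 / ||a||^2 = tr M_b^2 / ||b||^2.  Since
   defect is homogeneous under real rescaling and tr M^2 > 0 (M is Hermitian
   with tr M = -2 ||.||^2), rescaling lam by a suitable tau > 0 achieves this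
   balance, and rho = mu (+) tau lam is the required critical point. *)

From HB Require Import structures.
From mathcomp Require Import all_boot all_order all_algebra.
From mathcomp Require Import all_classical all_reals all_analysis.
From mathcomp Require Import complex.
From mathcomp Require Import ring lra.
Import Order.TTheory GRing.Theory Num.Theory.

Set Implicit Arguments.
Unset Strict Implicit.
Unset Printing Implicit Defensive.

Local Open Scope ring_scope.

Local Notation Re := complex.Re.

Section ComplexFacts.
Variable R : realType.
Local Notation C := R[i].

Lemma Re_realM (s : R) (z : C) : Re ((s%:C)%C * z) = s * Re z.
Proof. by case: z => a b /=; rewrite mul0r subr0. Qed.

Lemma conj_real (s : R) : Num.conj ((s%:C)%C : C) = (s%:C)%C.
Proof. exact: conjc_real. Qed.

Lemma ReD (x y : C) : Re (x + y) = Re x + Re y.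
Proof. by case: x => a b; case: y. Qed.

Lemma ReN (x : C) : Re (- x) = - Re x.
Proof. by case: x. Qed.

Lemma Re_sum I (r : seq I) (P : pred I) (F : I -> C) :
  Re (\sum_(i <- r | P i) F i) = \sum_(i <- r | P i) Re (F i).
Proof. by elim/big_rec2: _ => // i y1 y2 _ <-; rewrite ReD. Qed.

Lemma Re_realXM (s : R) (n : nat) (z : C) : Re ((s%:C)%C ^+ n * z) = s ^+ n * Re z.
Proof. by rewrite -rmorphXn Re_realM. Qed.

Lemma Re_2M (z : C) : Re (2 * z) = 2 * Re z.
Proof. by rewrite -[2 : C](rmorph_nat (real_complex R)) Re_realM. Qed.

Lemma Re_poly4 (s : R) (t0 t1 t2 t3 t4 : C) :
  Re (t0 + (s%:C)%C * t1 + (s%:C)%C ^+ 2 * t2 + (s%:C)%C ^+ 3 * t3 + (s%:C)%C ^+ 4 * t4)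
  = Re t0 + s * Re t1 + s ^+ 2 * Re t2 + s ^+ 3 * Re t3 + s ^+ 4 * Re t4.
Proof. by rewrite !ReD Re_realM !Re_realXM. Qed.

Lemma Re_poly2 (s : R) (t0 t1 t2 : C) :
  Re (t0 + (s%:C)%C * t1 + (s%:C)%C ^+ 2 * t2) = Re t0 + s * Re t1 + s ^+ 2 * Re t2.
Proof. by rewrite !ReD Re_realM !Re_realXM. Qed.

Lemma Re_mulJ (z : C) : Re (z * Num.conj z) = sqmod z.
Proof. by case: z => a b; rewrite /sqmod /=; lra. Qed.

Lemma sqmod_ge0 (z : C) : 0 <= sqmod z.
Proof. by rewrite /sqmod addr_ge0 ?sqr_ge0. Qed.

Lemma sqmod_gt0 (z : C) : z != 0 -> 0 < sqmod z.
Proof.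
case: z => x y nz; rewrite lt_def sqmod_ge0 andbT /sqmod /=.
rewrite paddr_eq0 ?sqr_ge0 // !sqrf_eq0.
by apply: contra nz => /andP[/eqP-> /eqP->].
Qed.

Lemma psum_gt0 k (F : 'I_k -> R) (i : 'I_k) :
  (forall j, 0 <= F j) -> 0 < F i -> 0 < \sum_j F j.
Proof.
by move=> F_ge0 Fi_gt0; rewrite (bigD1 i) //= ltr_pwDl // sumr_ge0.
Qed.

End ComplexFacts.

Arguments psum_gt0 {R k F} i.

Section Adjoint.
Variable R : realType.
Local Notation C := R[i].

Lemma adjmxD k (A B : 'M[C]_k) : adjmx (A + B) = adjmx A + adjmx B.
Proof. by rewrite /adjmx map_mxD linearD. Qed.

Lemma adjmxZ k (c : C) (A : 'M[C]_k) : adjmx (c *: A) = Num.conj c *: adjmx A.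
Proof. by rewrite /adjmx map_mxZ linearZ. Qed.

Lemma adjmxN k (A : 'M[C]_k) : adjmx (- A) = - adjmx A.
Proof. by rewrite /adjmx map_mxN linearN. Qed.

Lemma adjmxM k (A B : 'M[C]_k) : adjmx (A *m B) = adjmx B *m adjmx A.
Proof. by rewrite /adjmx map_mxM trmx_mul. Qed.

Lemma adjmxK k (A : 'M[C]_k) : adjmx (adjmx A) = A.
Proof. by rewrite /adjmx map_trmx trmxK; apply/matrixP=> i j; rewrite !mxE conjCK. Qed.

Lemma adjmx_sum k I (r : seq I) (P : pred I) (F : I -> 'M[C]_k) :
  adjmx (\sum_(i <- r | P i) F i) = \sum_(i <- r | P i) adjmx (F i).
Proof. by rewrite /adjmx raddf_sum /= raddf_sum. Qed.

Lemma Re_tr_mul_adjmx k (A : 'M[C]_k) :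
  Re (\tr (A *m adjmx A)) = \sum_l \sum_j sqmod (A l j).
Proof.
rewrite /mxtrace Re_sum; apply: eq_bigr => l _; rewrite mxE Re_sum.
by apply: eq_bigr => j _; rewrite !mxE Re_mulJ.
Qed.

End Adjoint.

Section FamilySums.
Variables (R : realType) (k : nat).
Local Notation C := R[i].
Local Notation M := 'M[C]_k.

(* All the sums defining M_mu have the shape sum_i X_i Y_i for two families
   of matrices indexed by the basis; msum is this pairing. *)
Definition msum (X Y : 'I_k -> M) : M := \sum_i X i *m Y i.
Definition adjf (X : 'I_k -> M) : 'I_k -> M := fun i => adjmx (X i).

Lemma msum_lin (X Y X' Y' : 'I_k -> M) (c : C) :
  msum (fun i => X i + c *: Y i) (fun i => X' i + c *: Y' i) =
  msum X X' + c *: (msum X Y' + msum Y X') + (c * c) *: msum Y Y'.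
Proof.
rewrite /msum; under eq_bigr do rewrite mulmxDl !mulmxDr -!scalemxAl -!scalemxAr scalerA.
rewrite !big_split /= -!scaler_sumr scalerDr.
by rewrite !addrA; congr (_ + _); rewrite -!addrA; congr (_ + _); rewrite addrC.
Qed.

Lemma msumZ (X Y : 'I_k -> M) (c : C) :
  msum (fun i => c *: X i) (fun i => c *: Y i) = (c * c) *: msum X Y.
Proof.
rewrite /msum scaler_sumr; apply: eq_bigr => i _.
by rewrite -scalemxAl -scalemxAr scalerA.
Qed.

Lemma adjf_lin (X Y : 'I_k -> M) (s : R) :
  adjf (fun i => X i + (s%:C)%C *: Y i) = fun i => adjf X i + (s%:C)%C *: adjf Y i.
Proof. by apply: funext => i; rewrite /adjf adjmxD adjmxZ conj_real. Qed.

Lemma adjf_scale (X : 'I_k -> M) (s : R) :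
  adjf (fun i => (s%:C)%C *: X i) = fun i => (s%:C)%C *: adjf X i.
Proof. by apply: funext => i; rewrite /adjf adjmxZ conj_real. Qed.

Lemma adjmx_msum (X Y : 'I_k -> M) : adjmx (msum X Y) = msum (adjf Y) (adjf X).
Proof. by rewrite /msum adjmx_sum; apply: eq_bigr => i _; rewrite adjmxM. Qed.

Lemma adjf_adjf (X : 'I_k -> M) : adjf (adjf X) = X.
Proof. by apply: funext => i; rewrite /adjf adjmxK. Qed.

Lemma mxtraceN (X : M) : \tr (- X) = - \tr X.
Proof. exact: raddfN. Qed.

Lemma tr_msum (X Y : 'I_k -> M) : \tr (msum X Y) = \sum_i \tr (X i *m Y i).
Proof. exact: raddf_sum. Qed.

Lemma tr_msumC (X Y : 'I_k -> M) : \tr (msum X Y) = \tr (msum Y X).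
Proof. by rewrite !tr_msum; apply: eq_bigr => i _; rewrite mxtrace_mulC. Qed.

End FamilySums.

Section PolarForms.
Variables (R : realType) (k : nat).
Local Notation C := R[i].
Local Notation M := 'M[C]_k.
Implicit Types (a b : bilmap R k) (s t : R).

Definition gramL a b : M := msum (Lmat a) (adjf (Lmat b)).

Definition comb3 (X Y Z : M) : M := (2 : C) *: X - (2 : C) *: Y - (2 : C) *: Z.

Lemma comb3_lin (X1 X2 X3 X4 Y1 Y2 Y3 Y4 Z1 Z2 Z3 Z4 : M) (c : C) :
  comb3 (X1 + c *: (X2 + X3) + (c * c) *: X4) (Y1 + c *: (Y3 + Y2) + (c * c) *: Y4)
        (Z1 + c *: (Z3 + Z2) + (c * c) *: Z4) =
  comb3 X1 Y1 Z1 + c *: (comb3 X2 Y2 Z2 + comb3 X3 Y3 Z3) + (c * c) *: comb3 X4 Y4 Z4.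
Proof. by apply/matrixP=> p q; rewrite !mxE; ring. Qed.

Lemma comb3Z (X Y Z : M) (c : C) : comb3 (c *: X) (c *: Y) (c *: Z) = c *: comb3 X Y Z.
Proof. by rewrite /comb3 !scalerBr !scalerA mulrC. Qed.

Definition polM a b : M :=
  comb3 (gramL a b) (msum (adjf (Lmat b)) (Lmat a)) (msum (adjf (Rmat b)) (Rmat a)).

Lemma Mmu_polM a : Mmu a = polM a a.
Proof. by []. Qed.

Lemma normsq_gramL a : normsq a = Re (\tr (gramL a a)).
Proof.
rewrite /gramL tr_msum Re_sum /normsq; apply: eq_bigr => i _.
rewrite Re_tr_mul_adjmx exchange_big /=; apply: eq_bigr => j _.
by apply: eq_bigr => l _; rewrite mxE.
Qed.

Lemma normsq_gramR a : normsq a = Re (\tr (msum (Rmat a) (adjf (Rmat a)))).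
Proof.
rewrite tr_msum Re_sum /normsq; under [RHS]eq_bigr do rewrite Re_tr_mul_adjmx exchange_big /=.
rewrite [RHS]exchange_big /=; apply: eq_bigr => i _; apply: eq_bigr => j _.
by apply: eq_bigr => l _; rewrite mxE.
Qed.

Definition lin a b (c : C) : bilmap R k := fun i j => a i j + c *: b i j.

Lemma Lmat_lin a b c : Lmat (lin a b c) = fun i => Lmat a i + c *: Lmat b i.
Proof. by apply: funext => i; apply/matrixP=> l j; rewrite !mxE. Qed.

Lemma Rmat_lin a b c : Rmat (lin a b c) = fun i => Rmat a i + c *: Rmat b i.
Proof. by apply: funext => i; apply/matrixP=> l j; rewrite !mxE. Qed.

Lemma gramL_lin a b s : gramL (lin a b (s%:C)%C) (lin a b (s%:C)%C) =
  gramL a a + (s%:C)%C *: (gramL a b + gramL b a) + ((s%:C)%C * (s%:C)%C) *: gramL b b.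
Proof. by rewrite /gramL Lmat_lin adjf_lin msum_lin. Qed.

Lemma polM_lin a b s : polM (lin a b (s%:C)%C) (lin a b (s%:C)%C) =
  polM a a + (s%:C)%C *: (polM a b + polM b a) + ((s%:C)%C * (s%:C)%C) *: polM b b.
Proof.
by rewrite /polM gramL_lin Lmat_lin Rmat_lin !adjf_lin !msum_lin comb3_lin.
Qed.

Definition scale t a : bilmap R k := fun i j => (t%:C)%C *: a i j.

Lemma Lmat_scale t a : Lmat (scale t a) = fun i => (t%:C)%C *: Lmat a i.
Proof. by apply: funext => i; apply/matrixP=> l j; rewrite !mxE. Qed.

Lemma Rmat_scale t a : Rmat (scale t a) = fun i => (t%:C)%C *: Rmat a i.
Proof. by apply: funext => i; apply/matrixP=> l j; rewrite !mxE. Qed.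

Lemma gramL_scale t a b :
  gramL (scale t a) (scale t b) = ((t%:C)%C * (t%:C)%C) *: gramL a b.
Proof. by rewrite /gramL !Lmat_scale adjf_scale msumZ. Qed.

Lemma polM_scale t a b :
  polM (scale t a) (scale t b) = ((t%:C)%C * (t%:C)%C) *: polM a b.
Proof.
by rewrite /polM gramL_scale !Lmat_scale !Rmat_scale !adjf_scale !msumZ comb3Z.
Qed.

End PolarForms.

Section Lines.
Variables (R : realType) (k : nat).
Local Notation C := R[i].
Local Notation M := 'M[C]_k.
Implicit Types (a b : bilmap R k) (s : R).

Lemma tr_sqr_quadratic (A B D : M) (c : C) :
  \tr ((A + c *: B + (c * c) *: D) *m (A + c *: B + (c * c) *: D)) =
  \tr (A *m A) + c * (2 * \tr (A *m B)) + c ^+ 2 * (2 * \tr (A *m D) + \tr (B *m B))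
  + c ^+ 3 * (2 * \tr (B *m D)) + c ^+ 4 * \tr (D *m D).
Proof.
rewrite !mulmxDl !mulmxDr -!scalemxAl -!scalemxAr !scalerA !mxtraceD !mxtraceZ.
rewrite [\tr (B *m A)]mxtrace_mulC [\tr (D *m A)]mxtrace_mulC [\tr (D *m B)]mxtrace_mulC.
ring.
Qed.

Lemma tr_quadratic (A B D : M) (c : C) :
  \tr (A + c *: B + (c * c) *: D) = \tr A + c * \tr B + c ^+ 2 * \tr D.
Proof. by rewrite !mxtraceD !mxtraceZ expr2. Qed.

(* tr M_a^2, and the first-order variations of tr M^2 (halved) and of
   ||.||^2 at a in direction b. *)
Definition g0 a : R := Re (\tr (Mmu a *m Mmu a)).
Definition g1 a b : R := Re (\tr (Mmu a *m (polM a b + polM b a))).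
Definition n1 a b : R := Re (\tr (gramL a b + gramL b a)).

(* Along a real line, F_k is a quartic polynomial over the square of a
   quadratic one; only the two lowest coefficients of the numerator matter. *)
Lemma Fk_line a b : exists c2 c3 c4 : R, forall s,
  Fk (lin a b (s%:C)%C) =
  (g0 a + s * (2 * g1 a b) + s ^+ 2 * c2 + s ^+ 3 * c3 + s ^+ 4 * c4)
  / (normsq a + s * n1 a b + s ^+ 2 * normsq b) ^+ 2.
Proof.
set K := polM a b + polM b a.
exists (Re (2 * \tr (Mmu a *m Mmu b) + \tr (K *m K))), (Re (2 * \tr (K *m Mmu b))),
  (Re (\tr (Mmu b *m Mmu b))) => s.
rewrite /Fk !Mmu_polM polM_lin tr_sqr_quadratic !normsq_gramL gramL_lin tr_quadratic.
by rewrite Re_poly4 Re_poly2 -!Mmu_polM (Re_2M (\tr (Mmu a *m K))).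
Qed.

Lemma is_derive_quartic_ratio (a0 a1 a2 a3 a4 b0 b1 b2 : R) : b0 != 0 ->
  is_derive (0 : R) (1 : R)
   (fun s : R => (a0 + s * a1 + s ^+ 2 * a2 + s ^+ 3 * a3 + s ^+ 4 * a4) /
                 (b0 + s * b1 + s ^+ 2 * b2) ^+ 2)
   ((a1 * b0 - 2 * a0 * b1) / b0 ^+ 3).
Proof.
move=> b0_neq0.
have num : is_derive (0 : R) (1 : R)
    (fun s : R => a0 + s * a1 + s ^+ 2 * a2 + s ^+ 3 * a3 + s ^+ 4 * a4) a1.
  by apply: is_derive_eq; rewrite /GRing.scale /=; ring.
have den : is_derive (0 : R) (1 : R)
    (fun s : R => (b0 + s * b1 + s ^+ 2 * b2) ^+ 2) (2 * b0 * b1).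
  by apply: is_derive_eq; rewrite /GRing.scale /=; ring.
have den0 : (fun s : R => (b0 + s * b1 + s ^+ 2 * b2) ^+ 2) 0 != 0.
  by rewrite /= mul0r expr0n /= mul0r !addr0 sqrf_eq0.
have := is_deriveM num (@is_deriveV R _ 0 _ 1 den0 den).
move=> quot; apply: (is_derive_eq quot).
by rewrite /GRing.scale /= mul0r expr0n /= mul0r !addr0; field.
Qed.

Definition defect a b : R := g1 a b * normsq a - g0 a * n1 a b.

Lemma is_derive_Fk_line a b : normsq a != 0 ->
  is_derive (0 : R) (1 : R) (fun s => Fk (lin a b (s%:C)%C))
    (2 * defect a b / normsq a ^+ 3).
Proof.
move=> Na_neq0; have [c2 [c3 [c4 line]]] := Fk_line a b.
have deriv := @is_derive_quartic_ratio (g0 a) (2 * g1 a b) c2 c3 c4 _ (n1 a b)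
  (normsq b) Na_neq0.
rewrite (funext line); apply: (is_derive_eq deriv).
by rewrite /defect mulrBr !mulrA.
Qed.

End Lines.

Section Critical.
Variables (R : realType) (k : nat).
Implicit Types (a b : bilmap R k).

Lemma normsq_gt0 a : (exists i j, a i j != 0) -> 0 < normsq a.
Proof.
case=> i [j aij_neq0].
have [l ailj_neq0] : exists l, a i j l 0 != 0.
  apply/existsP; apply: contraR aij_neq0; rewrite negb_exists => /forallP a0.
  by apply/eqP/matrixP=> l q; rewrite (ord1 q) mxE; apply/eqP/negPn/a0.
have sum_ge0 i' : 0 <= \sum_j' \sum_l' sqmod (a i' j' l' 0).
  by apply: sumr_ge0 => j' _; apply: sumr_ge0 => l' _; apply: sqmod_ge0.
apply: (psum_gt0 i) => //; apply: (psum_gt0 j) => [j'|].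
  by apply: sumr_ge0 => l' _; apply: sqmod_ge0.
by apply: (psum_gt0 l) => [l'|]; [apply: sqmod_ge0 | apply: sqmod_gt0].
Qed.

Lemma critical_defect a : critical a -> 0 < normsq a /\ forall b, defect a b = 0.
Proof.
case=> a_neq0 a_crit; have Na_gt0 := normsq_gt0 a_neq0; split=> // b.
have Na_neq0 := lt0r_neq0 Na_gt0.
have deriv0 := @derive_val _ _ _ _ _ _ _ (a_crit b).
have derivF := @derive_val _ _ _ _ _ _ _ (is_derive_Fk_line b Na_neq0).
have /eqP : 2 * defect a b / normsq a ^+ 3 = 0 by rewrite -derivF deriv0.
rewrite !mulf_eq0 invr_eq0 expf_eq0 (negbTE Na_neq0) pnatr_eq0 andbF !orbF.
by move/eqP.
Qed.

Lemma defect_critical a :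
  (exists i j, a i j != 0) -> (forall b, defect a b = 0) -> critical a.
Proof.
move=> a_neq0 a_defect; split=> // b.
have := is_derive_Fk_line b (lt0r_neq0 (normsq_gt0 a_neq0)).
by rewrite a_defect mulr0 mul0r.
Qed.

End Critical.

Section Positivity.
Variables (R : realType) (k : nat).
Local Notation C := R[i].
Implicit Types (a : bilmap R k).

Lemma comb3_adjmx (X Y Z : 'M[C]_k) :
  adjmx (comb3 X Y Z) = comb3 (adjmx X) (adjmx Y) (adjmx Z).
Proof. by rewrite /comb3 !adjmxD !adjmxN !adjmxZ rmorph_nat. Qed.

(* M_a is Hermitian, being built from sums of the form X X^*. *)
Lemma Mmu_hermitian a : adjmx (Mmu a) = Mmu a.
Proof. by rewrite Mmu_polM /polM /gramL comb3_adjmx !adjmx_msum !adjf_adjf. Qed.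

Lemma Re_tr_comb3 (X Y Z : 'M[C]_k) :
  Re (\tr (comb3 X Y Z)) = 2 * Re (\tr X) - 2 * Re (\tr Y) - 2 * Re (\tr Z).
Proof. by rewrite /comb3 !mxtraceD !mxtraceN !mxtraceZ !ReD !ReN !Re_2M. Qed.

(* Each of the three sums defining M_a has trace ||a||^2, so tr M_a = -2||a||^2. *)
Lemma Re_tr_Mmu a : Re (\tr (Mmu a)) = - (2 * normsq a).
Proof.
rewrite Mmu_polM /polM Re_tr_comb3 -normsq_gramL [\tr (msum (adjf _) (Lmat a))]tr_msumC.
by rewrite -normsq_gramL [\tr (msum (adjf _) _)]tr_msumC -normsq_gramR; lra.
Qed.

Lemma g0_gt0 a : 0 < normsq a -> 0 < g0 a.
Proof.
move=> Na_gt0.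
have [l Mll_neq0] : exists l, Mmu a l l != 0.
  apply/existsP; apply: contraTT Na_gt0; rewrite negb_exists => /forallP Mdiag0.
  have : \tr (Mmu a) = 0 by apply: big1 => l _; apply/eqP/negPn/Mdiag0.
  by move/(congr1 (@complex.Re R)); rewrite Re_tr_Mmu => trM0; rewrite -leNgt; lra.
rewrite /g0 -{2}(Mmu_hermitian a) Re_tr_mul_adjmx.
apply: (psum_gt0 l) => [i|]; first by apply: sumr_ge0 => j _; apply: sqmod_ge0.
by apply: (psum_gt0 l) => [j|]; [apply: sqmod_ge0 | apply: sqmod_gt0].
Qed.

End Positivity.

Section Scaling.
Variables (R : realType) (k : nat).
Local Notation C := R[i].
Implicit Types (a b : bilmap R k) (t : R).

Lemma Re_tr_scale2 t (X : 'M[C]_k) :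
  Re (\tr (((t%:C)%C * (t%:C)%C) *: X)) = t ^+ 2 * Re (\tr X).
Proof. by rewrite mxtraceZ -rmorphM Re_realM expr2. Qed.

Lemma Re_tr_scale4 t (X Y : 'M[C]_k) :
  Re (\tr ((((t%:C)%C * (t%:C)%C) *: X) *m (((t%:C)%C * (t%:C)%C) *: Y)))
  = t ^+ 4 * Re (\tr (X *m Y)).
Proof.
rewrite -scalemxAl -scalemxAr scalerA mxtraceZ -!rmorphM Re_realM.
by rewrite -!expr2 -exprM.
Qed.

Lemma g0_scale t a : g0 (scale t a) = t ^+ 4 * g0 a.
Proof. by rewrite /g0 !Mmu_polM polM_scale Re_tr_scale4. Qed.

Lemma g1_scale t a b : g1 (scale t a) (scale t b) = t ^+ 4 * g1 a b.
Proof. by rewrite /g1 !Mmu_polM !polM_scale -scalerDr Re_tr_scale4. Qed.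

Lemma normsq_scale t a : normsq (scale t a) = t ^+ 2 * normsq a.
Proof. by rewrite !normsq_gramL gramL_scale Re_tr_scale2. Qed.

Lemma n1_scale t a b : n1 (scale t a) (scale t b) = t ^+ 2 * n1 a b.
Proof. by rewrite /n1 !gramL_scale -scalerDr Re_tr_scale2. Qed.

Lemma defect_scale t a b : defect (scale t a) (scale t b) = t ^+ 6 * defect a b.
Proof.
rewrite /defect g1_scale normsq_scale g0_scale n1_scale.
by move: (g1 a b) (normsq a) (g0 a) (n1 a b) => x y z w; ring.
Qed.

Lemma bil_apply_scale t a (X Y : 'cV[C]_k) :
  bil_apply (scale t a) X Y = (t%:C)%C *: bil_apply a X Y.
Proof.
rewrite /bil_apply scaler_sumr; apply: eq_bigr => i _; rewrite scaler_sumr.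
by apply: eq_bigr => j _; rewrite /scale !scalerA mulrC.
Qed.

Lemma scaleK t b : t != 0 -> scale t (scale t^-1 b) = b.
Proof.
move=> t_neq0; apply: funext => i; apply: funext => j.
by rewrite /scale scalerA -rmorphM mulfV // rmorph1 scale1r.
Qed.

Lemma scale_defect0 t a : t != 0 ->
  (forall b, defect a b = 0) -> forall b, defect (scale t a) b = 0.
Proof. by move=> t_neq0 a_def0 b; rewrite -(scaleK b t_neq0) defect_scale a_def0 mulr0. Qed.

(* Real heart of the rescaling step: t^2 = ga Nb / (Na gb) works. *)
Lemma balance_real (ga gb Na Nb : R) : 0 < ga -> 0 < gb -> 0 < Na -> 0 < Nb ->
  exists2 t : R, 0 < t & ga * (t ^+ 2 * Nb) = (t ^+ 4 * gb) * Na.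
Proof.
move=> ga_gt0 gb_gt0 Na_gt0 Nb_gt0.
have s_ge0 : 0 <= ga * Nb / (Na * gb) by rewrite ltW // divr_gt0 ?mulr_gt0.
exists (Num.sqrt (ga * Nb / (Na * gb))).
  by rewrite sqrtr_gt0 divr_gt0 ?mulr_gt0.
rewrite (_ : 4 = 2 * 2)%N // exprM sqr_sqrtr //; field.
by rewrite !gt_eqF.
Qed.

End Scaling.

Lemma balancing_scale (R : realType) (k k' : nat) (a : bilmap R k) (b : bilmap R k') :
  0 < normsq a -> 0 < normsq b ->
  exists2 t : R, 0 < t & g0 a * normsq (scale t b) = g0 (scale t b) * normsq a.
Proof.
move=> Na_gt0 Nb_gt0.
have [t t_gt0 balance] := balance_real (g0_gt0 Na_gt0) (g0_gt0 Nb_gt0) Na_gt0 Nb_gt0.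
by exists t; rewrite // normsq_scale g0_scale.
Qed.

Section BlockMatrices.
Variables (R : realType) (n m : nat).
Local Notation C := R[i].
Local Notation M := 'M[C]_(n + m).

Lemma split_lshift (x : 'I_n) : fintype.split (lshift m x) = inl x.
Proof. exact: (@unsplitK n m (inl x)). Qed.

Lemma split_rshift (y : 'I_m) : fintype.split (rshift n y) = inr y.
Proof. exact: (@unsplitK n m (inr y)). Qed.

Lemma ulsubmxD (X Y : M) : ulsubmx (X + Y) = ulsubmx X + ulsubmx Y.
Proof. by apply/matrixP=> p q; rewrite !mxE. Qed.

Lemma drsubmxD (X Y : M) : drsubmx (X + Y) = drsubmx X + drsubmx Y.
Proof. by apply/matrixP=> p q; rewrite !mxE. Qed.

Lemma ulsubmx_comb3 (X Y Z : M) :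
  ulsubmx (comb3 X Y Z) = comb3 (ulsubmx X) (ulsubmx Y) (ulsubmx Z).
Proof. by apply/matrixP=> p q; rewrite !mxE. Qed.

Lemma drsubmx_comb3 (X Y Z : M) :
  drsubmx (comb3 X Y Z) = comb3 (drsubmx X) (drsubmx Y) (drsubmx Z).
Proof. by apply/matrixP=> p q; rewrite !mxE. Qed.

Lemma ulsubmx_sum (F : 'I_(n + m) -> M) : ulsubmx (\sum_i F i) = \sum_i ulsubmx (F i).
Proof. by elim/big_rec2: _ => [|i y1 y2 _ <-]; apply/matrixP=> p q; rewrite !mxE. Qed.

Lemma drsubmx_sum (F : 'I_(n + m) -> M) : drsubmx (\sum_i F i) = \sum_i drsubmx (F i).
Proof. by elim/big_rec2: _ => [|i y1 y2 _ <-]; apply/matrixP=> p q; rewrite !mxE. Qed.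

Lemma ursubmx_sum (F : 'I_(n + m) -> M) : ursubmx (\sum_i F i) = \sum_i ursubmx (F i).
Proof. by elim/big_rec2: _ => [|i y1 y2 _ <-]; apply/matrixP=> p q; rewrite !mxE. Qed.

Lemma dlsubmx_sum (F : 'I_(n + m) -> M) : dlsubmx (\sum_i F i) = \sum_i dlsubmx (F i).
Proof. by elim/big_rec2: _ => [|i y1 y2 _ <-]; apply/matrixP=> p q; rewrite !mxE. Qed.

Lemma adjmx_ulsubmx (X : M) : ulsubmx (adjmx X) = adjmx (ulsubmx X).
Proof. by apply/matrixP=> p q; rewrite !mxE. Qed.

Lemma adjmx_drsubmx (X : M) : drsubmx (adjmx X) = adjmx (drsubmx X).
Proof. by apply/matrixP=> p q; rewrite !mxE. Qed.

Lemma adjmx_block_diag (A : 'M[C]_n) (B : 'M[C]_m) :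
  adjmx (block_mx A 0 0 B) = block_mx (adjmx A) 0 0 (adjmx B).
Proof. by rewrite /adjmx map_block_mx tr_block_mx !map_mx0 !trmx0. Qed.

Lemma ulsubmx_bdiag_mull (A : 'M[C]_n) (B : 'M[C]_m) (X : M) :
  ulsubmx (block_mx A 0 0 B *m X) = A *m ulsubmx X.
Proof. by rewrite -[X in _ *m X]submxK mulmx_block block_mxKul mul0mx addr0. Qed.

Lemma ulsubmx_bdiag_mulr (A : 'M[C]_n) (B : 'M[C]_m) (X : M) :
  ulsubmx (X *m block_mx A 0 0 B) = ulsubmx X *m A.
Proof. by rewrite -[X in X *m _]submxK mulmx_block block_mxKul mulmx0 addr0. Qed.

Lemma drsubmx_bdiag_mull (A : 'M[C]_n) (B : 'M[C]_m) (X : M) :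
  drsubmx (block_mx A 0 0 B *m X) = B *m drsubmx X.
Proof. by rewrite -[X in _ *m X]submxK mulmx_block block_mxKdr mul0mx add0r. Qed.

Lemma drsubmx_bdiag_mulr (A : 'M[C]_n) (B : 'M[C]_m) (X : M) :
  drsubmx (X *m block_mx A 0 0 B) = drsubmx X *m B.
Proof. by rewrite -[X in X *m _]submxK mulmx_block block_mxKdr mulmx0 add0r. Qed.

Lemma bdiag_mul (A A' : 'M[C]_n) (B B' : 'M[C]_m) :
  block_mx A 0 0 B *m block_mx A' 0 0 B' = block_mx (A *m A') 0 0 (B *m B').
Proof. by rewrite mulmx_block !mulmx0 !mul0mx !addr0 !add0r. Qed.

Lemma tr_bdiag_mul (A : 'M[C]_n) (B : 'M[C]_m) (X : M) :
  \tr (block_mx A 0 0 B *m X) = \tr (A *m ulsubmx X) + \tr (B *m drsubmx X).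
Proof.
by rewrite -[X in _ *m X]submxK mulmx_block mxtrace_block !mul0mx addr0 add0r.
Qed.

Lemma tr_split (X : M) : \tr X = \tr (ulsubmx X) + \tr (drsubmx X).
Proof. by rewrite -{1}[X]submxK mxtrace_block. Qed.

Lemma comb3_block (X1 Y1 Z1 : 'M[C]_n) (X2 Y2 Z2 : 'M[C]_m) :
  comb3 (block_mx X1 0 0 X2) (block_mx Y1 0 0 Y2) (block_mx Z1 0 0 Z2) =
  block_mx (comb3 X1 Y1 Z1) 0 0 (comb3 X2 Y2 Z2).
Proof.
rewrite /comb3 !scale_block_mx !opp_block_mx !add_block_mx !scaler0 !oppr0 !addr0.
by [].
Qed.

(* A family of block-diagonal matrices whose index lshift x carries A x in the
   upper-left block and whose index rshift y carries B y in the lower-right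
   one: the shape of L_i and R_i for a direct sum of algebras. *)
Definition bfam (A : 'I_n -> 'M[C]_n) (B : 'I_m -> 'M[C]_m) : 'I_(n + m) -> M :=
  fun i => block_mx (if fintype.split i is inl x then A x else 0) 0 0
                    (if fintype.split i is inr y then B y else 0).

Definition ulf (G : 'I_(n + m) -> M) : 'I_n -> 'M[C]_n :=
  fun x => ulsubmx (G (lshift m x)).
Definition drf (G : 'I_(n + m) -> M) : 'I_m -> 'M[C]_m :=
  fun y => drsubmx (G (rshift n y)).

Section BlockFamily.
Variables (A : 'I_n -> 'M[C]_n) (B : 'I_m -> 'M[C]_m).

Lemma adjf_bfam : adjf (bfam A B) = bfam (adjf A) (adjf B).
Proof.
apply: funext => i; rewrite /adjf /bfam adjmx_block_diag.
by case: (fintype.split i) => x; rewrite /adjmx map_mx0 trmx0.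
Qed.

Lemma ulf_bfam : ulf (bfam A B) = A.
Proof. by apply: funext => x; rewrite /ulf /bfam block_mxKul split_lshift. Qed.

Lemma drf_bfam : drf (bfam A B) = B.
Proof. by apply: funext => y; rewrite /drf /bfam block_mxKdr split_rshift. Qed.

Lemma ulsubmx_msum_bfaml (G : 'I_(n + m) -> M) :
  ulsubmx (msum (bfam A B) G) = msum A (ulf G).
Proof.
rewrite /msum ulsubmx_sum big_split_ord /= [X in _ + X]big1 ?addr0 => [|y _].
  by apply: eq_bigr => x _; rewrite ulsubmx_bdiag_mull split_lshift.
by rewrite ulsubmx_bdiag_mull split_rshift mul0mx.
Qed.

Lemma ulsubmx_msum_bfamr (G : 'I_(n + m) -> M) :
  ulsubmx (msum G (bfam A B)) = msum (ulf G) A.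
Proof.
rewrite /msum ulsubmx_sum big_split_ord /= [X in _ + X]big1 ?addr0 => [|y _].
  by apply: eq_bigr => x _; rewrite ulsubmx_bdiag_mulr split_lshift.
by rewrite ulsubmx_bdiag_mulr split_rshift mulmx0.
Qed.

Lemma drsubmx_msum_bfaml (G : 'I_(n + m) -> M) :
  drsubmx (msum (bfam A B) G) = msum B (drf G).
Proof.
rewrite /msum drsubmx_sum big_split_ord /= big1 ?add0r => [|x _].
  by apply: eq_bigr => y _; rewrite drsubmx_bdiag_mull split_rshift.
by rewrite drsubmx_bdiag_mull split_lshift mul0mx.
Qed.

Lemma drsubmx_msum_bfamr (G : 'I_(n + m) -> M) :
  drsubmx (msum G (bfam A B)) = msum (drf G) B.
Proof.
rewrite /msum drsubmx_sum big_split_ord /= big1 ?add0r => [|x _].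
  by apply: eq_bigr => y _; rewrite drsubmx_bdiag_mulr split_rshift.
by rewrite drsubmx_bdiag_mulr split_lshift mulmx0.
Qed.

End BlockFamily.

Lemma msum_bfam (A A' : 'I_n -> 'M[C]_n) (B B' : 'I_m -> 'M[C]_m) :
  msum (bfam A B) (bfam A' B') = block_mx (msum A A') 0 0 (msum B B').
Proof.
have ur0 i : ursubmx (bfam A B i *m bfam A' B' i) = 0.
  by rewrite bdiag_mul block_mxKur.
have dl0 i : dlsubmx (bfam A B i *m bfam A' B' i) = 0.
  by rewrite bdiag_mul block_mxKdl.
rewrite -[LHS]submxK ulsubmx_msum_bfaml drsubmx_msum_bfaml ulf_bfam drf_bfam.
by rewrite /msum ursubmx_sum dlsubmx_sum (eq_bigr _ (fun i _ => ur0 i))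
  (eq_bigr _ (fun i _ => dl0 i)) !big1_eq.
Qed.

End BlockMatrices.

Section DirectSum.
Variables (R : realType) (n m : nat).
Local Notation C := R[i].

Lemma sum2_bdiag (V : zmodType) (f : 'I_(n + m) -> 'I_(n + m) -> V)
    (g : 'I_n -> 'I_n -> V) (h : 'I_m -> 'I_m -> V) :
  (forall x y, f (lshift m x) (lshift m y) = g x y) ->
  (forall x y, f (lshift m x) (rshift n y) = 0) ->
  (forall x y, f (rshift n x) (lshift m y) = 0) ->
  (forall x y, f (rshift n x) (rshift n y) = h x y) ->
  \sum_i \sum_j f i j = \sum_x \sum_y g x y + \sum_x \sum_y h x y.
Proof.
move=> fll flr frl frr; rewrite big_split_ord /=; congr (_ + _);
  apply: eq_bigr => x _; rewrite big_split_ord /=.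
  by rewrite [X in _ + X]big1 ?addr0 => [|y _]; [apply: eq_bigr => y _|].
by rewrite big1 ?add0r => [|y _]; [apply: eq_bigr => y _|].
Qed.

Lemma sum_col_mx p I (r : seq I) (P : pred I) (A : I -> 'M[C]_(n, p))
    (B : I -> 'M[C]_(m, p)) :
  \sum_(i <- r | P i) col_mx (A i) (B i) =
  col_mx (\sum_(i <- r | P i) A i) (\sum_(i <- r | P i) B i).
Proof. by elim/big_rec3: _ => [|i x y z _ ->]; rewrite ?col_mx0 ?add_col_mx. Qed.

Definition projl (v : bilmap R (n + m)) : bilmap R n :=
  fun x y => usubmx (v (lshift m x) (lshift m y)).
Definition projr (v : bilmap R (n + m)) : bilmap R m :=
  fun x y => dsubmx (v (rshift n x) (rshift n y)).

Lemma ulf_Lmat v : ulf (Lmat v) = Lmat (projl v).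
Proof. by apply: funext => x; apply/matrixP=> p q; rewrite !mxE. Qed.
Lemma ulf_Rmat v : ulf (Rmat v) = Rmat (projl v).
Proof. by apply: funext => x; apply/matrixP=> p q; rewrite !mxE. Qed.
Lemma drf_Lmat v : drf (Lmat v) = Lmat (projr v).
Proof. by apply: funext => x; apply/matrixP=> p q; rewrite !mxE. Qed.
Lemma drf_Rmat v : drf (Rmat v) = Rmat (projr v).
Proof. by apply: funext => x; apply/matrixP=> p q; rewrite !mxE. Qed.

Lemma ulf_adjf (G : 'I_(n + m) -> 'M[C]_(n + m)) : ulf (adjf G) = adjf (ulf G).
Proof. by apply: funext => x; rewrite /ulf /adjf adjmx_ulsubmx. Qed.
Lemma drf_adjf (G : 'I_(n + m) -> 'M[C]_(n + m)) : drf (adjf G) = adjf (drf G).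
Proof. by apply: funext => x; rewrite /drf /adjf adjmx_drsubmx. Qed.

Section Sum.
Variables (a : bilmap R n) (b : bilmap R m).

Definition dsum : bilmap R (n + m) := fun i j =>
  match fintype.split i, fintype.split j with
  | inl x, inl y => col_mx (a x y) 0
  | inr x, inr y => col_mx 0 (b x y)
  | _, _ => 0
  end.

Lemma bil_apply_dsum X1 X2 Y1 Y2 :
  bil_apply dsum (col_mx X1 Y1) (col_mx X2 Y2) =
  col_mx (bil_apply a X1 X2) (bil_apply b Y1 Y2).
Proof.
rewrite /bil_apply (@sum2_bdiag _ _
    (fun x y => col_mx ((X1 x 0 * X2 y 0) *: a x y) 0)
    (fun x y => col_mx 0 ((Y1 x 0 * Y2 y 0) *: b x y))) => [|x y|x y|x y|x y];
  rewrite /dsum ?split_lshift ?split_rshift ?col_mxEu ?col_mxEd ?scale_col_mx ?scaler0 //.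
under eq_bigr do rewrite sum_col_mx; under [X in _ + X]eq_bigr do rewrite sum_col_mx.
by rewrite !sum_col_mx !big1_eq add_col_mx addr0 add0r.
Qed.

Lemma dsum_neq0 : (exists i j, a i j != 0) -> exists i j, dsum i j != 0.
Proof.
case=> i [j aij_neq0]; exists (lshift m i), (lshift m j).
by rewrite /dsum !split_lshift col_mx_eq0 negb_and aij_neq0.
Qed.

Lemma projl_dsum : projl dsum = a.
Proof.
apply: funext => x; apply: funext => y.
by rewrite /projl /dsum !split_lshift col_mxKu.
Qed.

Lemma projr_dsum : projr dsum = b.
Proof.
apply: funext => x; apply: funext => y.
by rewrite /projr /dsum !split_rshift col_mxKd.
Qed.

Lemma Lmat_dsum : Lmat dsum = bfam (Lmat a) (Lmat b).
Proof.
apply: funext => i; rewrite -[LHS]submxK /bfam.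
by case: (split_ordP i) => x ->; rewrite ?split_lshift ?split_rshift;
  congr block_mx; apply/matrixP=> p q;
  rewrite !mxE /dsum ?split_lshift ?split_rshift ?col_mxEu ?col_mxEd ?mxE.
Qed.

Lemma Rmat_dsum : Rmat dsum = bfam (Rmat a) (Rmat b).
Proof.
apply: funext => i; rewrite -[LHS]submxK /bfam.
by case: (split_ordP i) => x ->; rewrite ?split_lshift ?split_rshift;
  congr block_mx; apply/matrixP=> p q;
  rewrite !mxE /dsum ?split_lshift ?split_rshift ?col_mxEu ?col_mxEd ?mxE.
Qed.

Lemma ulsubmx_gramLl v : ulsubmx (gramL dsum v) = gramL a (projl v).
Proof. by rewrite /gramL Lmat_dsum ulsubmx_msum_bfaml ulf_adjf ulf_Lmat. Qed.
Lemma ulsubmx_gramLr v : ulsubmx (gramL v dsum) = gramL (projl v) a.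
Proof. by rewrite /gramL Lmat_dsum adjf_bfam ulsubmx_msum_bfamr ulf_Lmat. Qed.
Lemma drsubmx_gramLl v : drsubmx (gramL dsum v) = gramL b (projr v).
Proof. by rewrite /gramL Lmat_dsum drsubmx_msum_bfaml drf_adjf drf_Lmat. Qed.
Lemma drsubmx_gramLr v : drsubmx (gramL v dsum) = gramL (projr v) b.
Proof. by rewrite /gramL Lmat_dsum adjf_bfam drsubmx_msum_bfamr drf_Lmat. Qed.

Lemma ulsubmx_polMl v : ulsubmx (polM dsum v) = polM a (projl v).
Proof.
rewrite /polM ulsubmx_comb3 ulsubmx_gramLl Lmat_dsum Rmat_dsum.
by rewrite !ulsubmx_msum_bfamr !ulf_adjf ulf_Lmat ulf_Rmat.
Qed.
Lemma ulsubmx_polMr v : ulsubmx (polM v dsum) = polM (projl v) a.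
Proof.
rewrite /polM ulsubmx_comb3 ulsubmx_gramLr Lmat_dsum Rmat_dsum !adjf_bfam.
by rewrite !ulsubmx_msum_bfaml ulf_Lmat ulf_Rmat.
Qed.
Lemma drsubmx_polMl v : drsubmx (polM dsum v) = polM b (projr v).
Proof.
rewrite /polM drsubmx_comb3 drsubmx_gramLl Lmat_dsum Rmat_dsum.
by rewrite !drsubmx_msum_bfamr !drf_adjf drf_Lmat drf_Rmat.
Qed.
Lemma drsubmx_polMr v : drsubmx (polM v dsum) = polM (projr v) b.
Proof.
rewrite /polM drsubmx_comb3 drsubmx_gramLr Lmat_dsum Rmat_dsum !adjf_bfam.
by rewrite !drsubmx_msum_bfaml drf_Lmat drf_Rmat.
Qed.

Lemma Mmu_dsum : Mmu dsum = block_mx (Mmu a) 0 0 (Mmu b).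
Proof.
by rewrite !Mmu_polM /polM /gramL Lmat_dsum Rmat_dsum !adjf_bfam !msum_bfam comb3_block.
Qed.

Lemma g0_dsum : g0 dsum = g0 a + g0 b.
Proof. by rewrite /g0 Mmu_dsum tr_bdiag_mul block_mxKul block_mxKdr ReD. Qed.

Lemma normsq_dsum : normsq dsum = normsq a + normsq b.
Proof.
rewrite !normsq_gramL tr_split ulsubmx_gramLl drsubmx_gramLl.
by rewrite projl_dsum projr_dsum ReD.
Qed.

Lemma n1_dsum v : n1 dsum v = n1 a (projl v) + n1 b (projr v).
Proof.
rewrite /n1 tr_split ulsubmxD drsubmxD ulsubmx_gramLl ulsubmx_gramLr.
by rewrite drsubmx_gramLl drsubmx_gramLr ReD.
Qed.

Lemma g1_dsum v : g1 dsum v = g1 a (projl v) + g1 b (projr v).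
Proof.
rewrite /g1 Mmu_dsum tr_bdiag_mul ulsubmxD drsubmxD ulsubmx_polMl ulsubmx_polMr.
by rewrite drsubmx_polMl drsubmx_polMr ReD.
Qed.

End Sum.

Lemma balanced_sum (x1 x2 N1 N2 y1 y2 z1 z2 : R) : N1 != 0 -> N2 != 0 ->
  x1 * N1 = y1 * z1 -> x2 * N2 = y2 * z2 -> y1 * N2 = y2 * N1 ->
  (x1 + x2) * (N1 + N2) - (y1 + y2) * (z1 + z2) = 0.
Proof.
move=> N1_neq0 N2_neq0 e1 e2 e3.
have -> : x1 = y1 * z1 / N1 by rewrite -e1 mulfK.
have -> : x2 = y2 * z2 / N2 by rewrite -e2 mulfK.
have -> : y2 = y1 * N2 / N1 by rewrite e3 mulfK.
by field; rewrite N1_neq0 N2_neq0.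
Qed.

Lemma dsum_defect0 (a : bilmap R n) (b : bilmap R m) :
  0 < normsq a -> 0 < normsq b -> g0 a * normsq b = g0 b * normsq a ->
  (forall v, defect a v = 0) -> (forall v, defect b v = 0) ->
  forall v, defect (dsum a b) v = 0.
Proof.
move=> Na_gt0 Nb_gt0 balance a_def0 b_def0 v.
rewrite /defect g1_dsum normsq_dsum g0_dsum n1_dsum.
apply: (balanced_sum (lt0r_neq0 Na_gt0) (lt0r_neq0 Nb_gt0) _ _ balance);
  apply/eqP; rewrite -subr_eq0; apply/eqP; [exact: a_def0 | exact: b_def0].
Qed.

End DirectSum.

Unset Implicit Arguments.

Theorem mainTheorem4 (R : realType) (n m : nat)
    (mu : bilmap R n) (lam : bilmap R m) :
  critical mu -> critical lam ->
  exists t : R[i], exists rho : bilmap R (n + m),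
    (forall (X1 X2 : 'cV[R[i]]_n) (Y1 Y2 : 'cV[R[i]]_m),
        bil_apply rho (col_mx X1 Y1) (col_mx X2 Y2)
        = col_mx (bil_apply mu X1 X2) (t *: bil_apply lam Y1 Y2))
    /\ critical rho.
Proof.
move=> mu_crit lam_crit.
have [Nmu_gt0 mu_def0] := critical_defect mu_crit.
have [Nlam_gt0 lam_def0] := critical_defect lam_crit.
have [tau tau_gt0 balance] := balancing_scale Nmu_gt0 Nlam_gt0.
exists (tau%:C)%C, (dsum mu (scale tau lam)); split.
  by move=> X1 X2 Y1 Y2; rewrite bil_apply_dsum bil_apply_scale.
apply: defect_critical; first exact: dsum_neq0 (proj1 mu_crit).
apply: dsum_defect0 => //; first by rewrite normsq_scale mulr_gt0 ?exprn_gt0.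
exact: scale_defect0 (lt0r_neq0 tau_gt0) lam_def0.
Qed.
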